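(* Let $k\ge1$. If $k$ is even, the evaluation problem of $\Sigma_k$-DNF (i.e. the class of $\tau$-structures encoding true $\Sigma_k$-DNF formulas) is definable by a $\Sigma^1_{k+1}\text{-}\mathrm{KROM}^r(\tau)$ sentence; if $k$ is odd, the evaluation problem of $\Pi_k$-DNF is definable by a $\Pi^1_{k+1}\text{-}\mathrm{KROM}^r(\tau)$ sentence. Here $\tau=\{\mathrm{Clause},\mathrm{Var}_1,\dots,\mathrm{Var}_k,\mathrm{Pos},\mathrm{Neg}\}$ and formulas are encoded as described in the context.
   Context: A $\Sigma_k$-DNF (resp. $\Pi_k$-DNF) formula is a quantified Boolean formula $Q_1\bar{x}_1Q_2\bar{x}_2\cdots Q_k\bar{x}_k\,\phi$ with alternating quantifier blocks, $Q_1=\exists$ (resp. $Q_1=\forall$), and quantifier-free matrix $\phi$ in disjunctive normal form (a disjunction of ''clauses'', each a conjunction of literals). Such a formula is encoded by a finite structure over $\tau=\{\mathrm{Clause},\mathrm{Var}_1,\dots,\mathrm{Var}_k,\mathrm{Pos},\mathrm{Neg}\}$ ($\mathrm{Clause},\mathrm{Var}_h$ unary, $\mathrm{Pos},\mathrm{Neg}$ binary) whose domain consists of the clauses and variables, where $\mathrm{Clause}\,i$ holds iff $i$ is a clause, $\mathrm{Var}_h\,j$ iff $j$ is a variable of block $\bar{x}_h$, and $\mathrm{Pos}\,ij$ (resp. $\mathrm{Neg}\,ij$) iff variable $j$ occurs positively (resp. negatively) in clause $i$. For a vocabulary $\tau$, an SO-KROM$^r(\tau)$ formula is a second-order formula $Q_1R_1\cdots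 Q_mR_m\forall\bar{x}(C_1\wedge\cdots\wedge C_n)$, where each $Q_i\in\{\forall,\exists\}$, $R_i$ are second-order relation variables, and each clause $C_j$ is a disjunction $\beta_1\vee\cdots\vee\beta_q\vee H_1\vee H_2$ in which each $\beta_s$ is an atomic or negated atomic $\tau$-formula (equality included), and each $H_t$ is one of $R_i\bar{z}$, $\neg R_i\bar{z}$, $\exists z_1\cdots\exists z_{r}R_i z_1\dots z_r$ ($r$ the arity of $R_i$), or $\bot$. $\Sigma^1_k\text{-}\mathrm{KROM}^r$ (resp. $\Pi^1_k\text{-}\mathrm{KROM}^r$) is the set of SO-KROM$^r$ formulas whose second-order prefix starts with an existential (resp. universal) quantifier and has exactly $k-1$ alternations between blocks of existential and universal quantifiers. *)

From mathcomp Require Import all_boot.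
Unset Printing Implicit Defensive.

(* Domain is 'I_(dsize A); Var_{h+1} is tVar A h for h : 'I_k.        *)
Record tau_struct (k : nat) := TauStruct {
  dsize : nat;
  tClause : 'I_dsize -> bool;
  tVar : 'I_k -> 'I_dsize -> bool;
  tPos : 'I_dsize -> 'I_dsize -> bool;
  tNeg : 'I_dsize -> 'I_dsize -> bool }.
Arguments dsize {k}. Arguments tClause {k}. Arguments tVar {k}.
Arguments tPos {k}. Arguments tNeg {k}.

Section Encoding.
Variables (k : nat) (A : tau_struct k).
Local Notation D := ('I_(dsize A)).

Definition is_var (x : D) : bool := [exists h, tVar A h x].

(* A encodes a quantified DNF formula with k blocks: the domain consists of
   the clauses and the variables (each element is exactly one of: a clause, a
   variable of block h for a unique h), and Pos/Neg relate clauses to variables. *)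
Definition encodes_qdnf : Prop :=
  (forall x : D, tClause A x + #|[pred h | tVar A h x]| = 1)%N /\
  (forall i j : D, tPos A i j -> tClause A i && is_var j) /\
  (forall i j : D, tNeg A i j -> tClause A i && is_var j).

Definition dnf_holds (a : D -> bool) : bool :=
  [exists c : D, tClause A c &&
     [forall x : D, (tPos A c x ==> a x) && (tNeg A c x ==> ~~ a x)]].

Fixpoint qeval (ex : bool) (hs : seq 'I_k) (a : D -> bool) : Prop :=
  match hs with
  | [::] => dnf_holds a
  | h :: hs' =>
      if ex then exists b : {ffun D -> bool},
                   qeval (~~ ex) hs' (fun x => if tVar A h x then b x else a x)
      else forall b : {ffun D -> bool},
                   qeval (~~ ex) hs' (fun x => if tVar A h x then b x else a x)
  end.

(* A encodes a true Sigma_k-DNF (ex = true) / Pi_k-DNF (ex = false) formula *)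
Definition true_qdnf (ex : bool) : Prop :=
  encodes_qdnf /\ qeval ex (enum 'I_k) (fun _ => false).

End Encoding.
Arguments true_qdnf {k}. Arguments encodes_qdnf {k}. Arguments qeval {k}.
Arguments dnf_holds {k}. Arguments is_var {k}.

(*   Q_1 R_1 ... Q_m R_m forall xbar (C_1 /\ ... /\ C_n)              *)
(* First-order variables are nats; the block forall xbar quantifies   *)
(* all first-order variables occurring in the matrix.                 *)
Inductive tatom (k : nat) :=
  | AClause of nat
  | AVar of 'I_k & nat
  | APos of nat & nat
  | ANeg of nat & nat
  | AEq of nat & nat.

(* literal beta: (true, at) = at, (false, at) = ~ at *)
Definition tlit (k : nat) := (bool * tatom k)%type.

(* the H_t disjuncts; SO variables are indices into the prefix *)
Inductive hlit :=
  | HPos of nat & seq nat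
  | HNeg of nat & seq nat
  | HEx of nat                   (* exists z_1..z_r, R_i z_1 .. z_r *)
  | HBot.

Record krom_clause (k : nat) := KClause {
  kbetas : seq (tlit k); kH1 : hlit; kH2 : hlit }.
Arguments kbetas {k}. Arguments kH1 {k}. Arguments kH2 {k}.

(* prefix: list of (is_existential, arity) for R_1, ..., R_m *)
Record krom_formula (k : nat) := KForm {
  kprefix : seq (bool * nat);
  kclauses : seq (krom_clause k) }.
Arguments kprefix {k}. Arguments kclauses {k}.

Definition so_arity (p : seq (bool * nat)) (i : nat) : nat := (nth (true, 0) p i).2.

Definition wf_hlit (p : seq (bool * nat)) (H : hlit) : bool :=
  match H with
  | HPos i zs | HNeg i zs => (i < size p) && (size zs == so_arity p i)
  | HEx i => i < size p
  | HBot => true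
  end.

Definition wf_krom {k : nat} (phi : krom_formula k) : bool :=
  all (fun C => wf_hlit (kprefix phi) (kH1 C) && wf_hlit (kprefix phi) (kH2 C))
      (kclauses phi).

Fixpoint alternations (qs : seq bool) : nat :=
  match qs with
  | q1 :: ((q2 :: _) as qs') => (q1 != q2) + alternations qs'
  | _ => 0
  end.

(* Sigma^1_j (ex = true) / Pi^1_j (ex = false): prefix starts with the given
   quantifier and has exactly j-1 alternations *)
Definition krom_class (ex : bool) (j : nat) {k : nat} (phi : krom_formula k) : bool :=
  [&& wf_krom phi, head (~~ ex) (map fst (kprefix phi)) == ex
    & alternations (map fst (kprefix phi)) == j.-1].

Section Semantics.
Variables (k : nat) (A : tau_struct k).
Local Notation D := ('I_(dsize A)).

Definition eval_tatom (s : nat -> D) (t : tatom k) : bool :=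
  match t with
  | AClause x => tClause A (s x)
  | AVar h x => tVar A h (s x)
  | APos x y => tPos A (s x) (s y)
  | ANeg x y => tNeg A (s x) (s y)
  | AEq x y => s x == s y
  end.

Definition eval_tlit (s : nat -> D) (l : tlit k) : bool :=
  if l.1 then eval_tatom s l.2 else ~~ eval_tatom s l.2.

(* env i = interpretation of R_i, as a predicate on tuples (as sequences) *)
Definition eval_hlit (p : seq (bool * nat)) (env : seq (seq D -> bool))
    (s : nat -> D) (H : hlit) : bool :=
  match H with
  | HPos i zs => nth (fun _ => false) env i (map s zs)
  | HNeg i zs => ~~ nth (fun _ => false) env i (map s zs)
  | HEx i => [exists t : (so_arity p i).-tuple D, nth (fun _ => false) env i t]
  | HBot => false
  end.

Definition eval_clause p env s (C : krom_clause k) : bool :=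
  has (eval_tlit s) (kbetas C) || eval_hlit p env s (kH1 C) || eval_hlit p env s (kH2 C).

Definition eval_matrix p env (Cs : seq (krom_clause k)) : Prop :=
  forall s : nat -> D, all (eval_clause p env s) Cs.

Definition rel_of {a : nat} (R : {set a.-tuple D}) : seq D -> bool :=
  fun xs => [exists t : a.-tuple D, (t \in R) && (val t == xs)].

(* q is the remaining part of the prefix; env the interpretations so far *)
Fixpoint eval_prefix (p : seq (bool * nat)) (Cs : seq (krom_clause k))
    (q : seq (bool * nat)) (env : seq (seq D -> bool)) : Prop :=
  match q with
  | [::] => eval_matrix p env Cs
  | (ex, a) :: q' =>
      if ex then exists R : {set a.-tuple D}, eval_prefix p Cs q' (rcons env (rel_of R))
      else forall R : {set a.-tuple D}, eval_prefix p Cs q' (rcons env (rel_of R))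
  end.

Definition krom_sat (phi : krom_formula k) : Prop :=
  eval_prefix (kprefix phi) (kclauses phi) (kprefix phi) [::].

End Semantics.
Arguments krom_sat {k}.

Definition defines {k : nat} (phi : krom_formula k) (P : tau_struct k -> Prop) : Prop :=
  forall A : tau_struct k, (0 < dsize A)%N -> (krom_sat A phi <-> P A).

From mathcomp Require Import all_boot.

Set Implicit Arguments.
Unset Strict Implicit.

(* Block h of first-order variables is represented by a unary relation R_h, quantified like
   the block; the assignment reads R_h on the variables of block h. A final existential unary
   relation R_k selects clauses of the matrix: Krom clauses force every selected element to be
   a clause whose literals all hold under the R_h, and [exists z, R_k z] forces a selection.
   So the matrix holds iff such an R_k exists, which costs one existential block and one more
   alternation, since the innermost block of a Sigma_k (k even) or Pi_k (k odd) formula is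
   universal. Further first-order Krom clauses check that the structure is an encoding. *)

Lemma has_enum (T : finType) (P : pred T) : has P (enum T) = [exists x, P x].
Proof.
apply/hasP/existsP => [[x _ Px]|[x Px]]; first by exists x.
by exists x; rewrite ?mem_enum.
Qed.

Lemma exists_tuple1 (T : finType) (P : seq T -> bool) :
  [exists t : 1.-tuple T, P t] = [exists x, P [:: x]].
Proof.
apply/existsP/existsP => [[[[|x [|]]] //= _ Px]|[x Px]]; first by exists x.
by exists [tuple x].
Qed.

Lemma eval_prefix_matrix k (A : tau_struct k) p Cs q env :
  eval_prefix k A p Cs q env -> exists env', eval_matrix k A p env' Cs.
Proof.
elim: q env => [|[[] a] q IH] env /=; first by exists env.
  by case=> R /IH.
by move=> /(_ set0) /IH.
Qed.

Section DnfFormula.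
Variables (k : nat) (ex : bool).

Definition block_prefix (j n : nat) : seq (bool * nat) :=
  [seq (odd h (+) ex, 1) | h <- iota j n] ++ [:: (true, 1)].

Lemma block_prefixS j n : block_prefix j n.+1 = (odd j (+) ex, 1) :: block_prefix j.+1 n.
Proof. by []. Qed.

Lemma alternations_block_prefix j n :
  odd (j + n) (+) ex -> alternations (map fst (block_prefix j n)) = n.
Proof.
elim: n j => [//|n IH] j; rewrite -addSnnS => par; move: (IH _ par).
case: n {IH} par => [|n] par.
  by move: par; rewrite addn0 /= addNb; case: (odd j (+) ex).
by rewrite !block_prefixS /= addNb => ->; case: (odd j (+) ex).
Qed.

Definition dnf_prefix : seq (bool * nat) := block_prefix 0 k.

(* First-order variable 0 stands for a clause, 1 for a variable; R_k is the selection. *)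
Definition sel_nonempty : krom_clause k := KClause k [::] (HEx k) HBot.
Definition sel_clause : krom_clause k :=
  KClause k [:: (true, AClause k 0)] (HNeg k [:: 0]) HBot.
Definition sel_pos (h : 'I_k) : krom_clause k :=
  KClause k [:: (false, APos k 0 1); (false, AVar k h 1)] (HNeg k [:: 0]) (HPos h [:: 1]).
Definition sel_neg (h : 'I_k) : krom_clause k :=
  KClause k [:: (false, ANeg k 0 1); (false, AVar k h 1)] (HNeg k [:: 0]) (HNeg h [:: 1]).
Definition sort_total : krom_clause k :=
  KClause k ((true, AClause k 0) :: [seq (true, AVar k h 0) | h <- enum 'I_k]) HBot HBot.
Definition sort_clause_var (h : 'I_k) : krom_clause k :=
  KClause k [:: (false, AClause k 0); (false, AVar k h 0)] HBot HBot.
Definition sort_var_var (hh : 'I_k * 'I_k) : krom_clause k :=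
  KClause k [:: (false, AVar k hh.1 0); (false, AVar k hh.2 0)] HBot HBot.
Definition pos_clause : krom_clause k :=
  KClause k [:: (false, APos k 0 1); (true, AClause k 0)] HBot HBot.
Definition pos_var : krom_clause k :=
  KClause k ((false, APos k 0 1) :: [seq (true, AVar k h 1) | h <- enum 'I_k]) HBot HBot.
Definition neg_clause : krom_clause k :=
  KClause k [:: (false, ANeg k 0 1); (true, AClause k 0)] HBot HBot.
Definition neg_var : krom_clause k :=
  KClause k ((false, ANeg k 0 1) :: [seq (true, AVar k h 1) | h <- enum 'I_k]) HBot HBot.

Definition distinct_blocks : seq ('I_k * 'I_k) :=
  [seq hh <- enum {: 'I_k * 'I_k} | hh.1 != hh.2].

Definition dnf_clauses : seq (krom_clause k) :=
  [:: sel_nonempty; sel_clause; sort_total; pos_clause; pos_var; neg_clause; neg_var]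
  ++ map sort_clause_var (enum 'I_k) ++ map sort_var_var distinct_blocks
  ++ map sel_pos (enum 'I_k) ++ map sel_neg (enum 'I_k).

Definition dnf_krom : krom_formula k := KForm k dnf_prefix dnf_clauses.

Lemma size_dnf_prefix : size dnf_prefix = k.+1.
Proof. by rewrite size_cat size_map size_iota addn1. Qed.

Lemma so_arity_dnf_prefix i : i <= k -> so_arity dnf_prefix i = 1.
Proof.
move=> le_ik; rewrite /so_arity nth_cat size_map size_iota.
case: ltnP => [lt_ik|le_ki]; first by rewrite (nth_map 0) ?size_iota.
by rewrite (_ : i - k = 0) //; apply/eqP; rewrite subn_eq0.
Qed.

Lemma wf_dnf_krom : wf_krom dnf_krom.
Proof.
rewrite /wf_krom /= size_dnf_prefix so_arity_dnf_prefix //= ltnSn /= !all_cat !all_map.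
by apply/and4P; split; apply/allP => h _ //=;
  rewrite size_dnf_prefix !so_arity_dnf_prefix ?ltnSn ?ltnS ?(ltnW (ltn_ord h)).
Qed.

Lemma dnf_krom_class : ex = ~~ odd k -> krom_class ex k.+1 dnf_krom.
Proof.
move=> exE; apply/and3P; split; first exact: wf_dnf_krom.
  by rewrite /= /dnf_prefix /block_prefix; case: k exE => [|k'] //= ->.
by rewrite /= alternations_block_prefix // exE add0n addbN addbb.
Qed.

Lemma all_dnf_clauses (P : pred (krom_clause k)) : all P dnf_clauses <->
  [/\ [/\ P sel_nonempty, P sel_clause, P sort_total, P pos_clause & P pos_var],
      [/\ P neg_clause, P neg_var & forall h, P (sort_clause_var h)],
      forall h h', h != h' -> P (sort_var_var (h, h'))
    & forall h, P (sel_pos h) && P (sel_neg h)].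
Proof.
rewrite /dnf_clauses /= !all_cat !all_map; split.
  case/and5P => -> -> -> -> /and4P[-> -> -> /and4P[/allP a1 /allP a2 /allP a3 /allP a4]].
  split=> //.
  - by split=> // h; apply: a1; rewrite -enumT mem_enum.
  - by move=> h h' hh; apply: (a2 (h, h')); rewrite /distinct_blocks mem_filter mem_enum hh.
  - by move=> h; apply/andP; split; [apply: a3|apply: a4]; rewrite -enumT mem_enum.
case=> [[-> -> -> -> ->] [-> -> a1] a2 a3] /=.
apply/and4P; split.
- by apply/allP => h _ /=.
- by apply/allP => -[h h']; rewrite /distinct_blocks mem_filter /= => /andP[hh _]; exact: a2.
- by apply/allP => h _ /=; case/andP: (a3 h).
- by apply/allP => h _ /=; case/andP: (a3 h).
Qed.

End DnfFormula.

Section DnfSemantics.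
Variables (k : nat) (ex : bool) (A : tau_struct k).
Local Notation D := ('I_(dsize A)).

Lemma rel_of_set1 (b : D -> bool) x :
  rel_of k A [set t : 1.-tuple D | b (thead t)] [:: x] = b x.
Proof.
apply/existsP/idP => [[[[|y [|]]] //= sz]|bx].
  by rewrite inE /thead (tnth_nth x) /= => /andP[yb /eqP[<-]].
by exists [tuple x]; rewrite inE /thead (tnth_nth x) /= bx andTb.
Qed.

Definition well_sorted (x : D) : bool :=
  [&& tClause A x || is_var A x, [forall h, ~~ (tClause A x && tVar A h x)] &
      [forall h, forall h', (h != h') ==> ~~ (tVar A h x && tVar A h' x)]].

Definition well_linked (i j : D) : bool :=
  (tPos A i j ==> tClause A i && is_var A j) && (tNeg A i j ==> tClause A i && is_var A j).

Lemma well_sortedE x : tClause A x + #|[pred h | tVar A h x]| = 1 <-> well_sorted x.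
Proof.
rewrite /well_sorted; case: (tClause A x) => /=; split.
- rewrite -[1]addn0 => /addnI/card0_eq vx.
  by apply/andP; split; apply/forallP => h; [|apply/forall_inP => h' _];
    move: (vx h); rewrite !inE => ->.
- case/andP=> /forallP nvx _; rewrite -[1]addn0; congr (_ + _).
  by apply: eq_card0 => h; rewrite !inE; move/negbTE: (nvx h).
- move/eqP/card1P => [h0 vx].
  have vxE h : tVar A h x = (h == h0) by move: (vx h); rewrite !inE.
  apply/and3P; split; [by apply/existsP; exists h0; rewrite vxE | by apply/forallP|].
  apply/forallP => h; apply/forall_inP => h' neq_hh'; rewrite !vxE.
  by apply: contra neq_hh' => /andP[/eqP-> /eqP->].
- case/and3P => /existsP[h0 vx0] _ /forallP uniq_vx; apply: (@eq_card1 _ h0) => h.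
  rewrite !inE; case: (eqVneq h h0) => [->//|neq_hh0].
  by move/forall_inP: (uniq_vx h) => /(_ h0 neq_hh0); rewrite vx0 andbT => /negbTE.
Qed.

Lemma encodes_qdnfE :
  encodes_qdnf A <-> (forall x, well_sorted x) /\ (forall i j, well_linked i j).
Proof.
split=> [[sorted [pos neg]]|[sorted linked]].
  split=> [x|i j]; first exact/well_sortedE.
  by apply/andP; split; apply/implyP; [apply: pos | apply: neg].
split=> [x|]; first exact/well_sortedE.
by split=> i j ij; case/andP: (linked i j) => /implyP p /implyP n; [exact: p | exact: n].
Qed.

Definition rel1 (env : seq (seq D -> bool)) (i : nat) (x : D) : bool :=
  nth (fun _ => false) env i [:: x].

Definition selects (S : D -> bool) (R : nat -> D -> bool) : Prop :=
  (exists c, S c) /\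
  forall c, S c -> tClause A c /\
    forall x (h : 'I_k), tVar A h x -> (tPos A c x -> R h x) /\ (tNeg A c x -> ~~ R h x).

Lemma dnf_matrix_sound (d0 : D) env :
  eval_matrix k A (dnf_prefix k ex) env (dnf_clauses k) ->
  [/\ forall x, well_sorted x, forall i j, well_linked i j & selects (rel1 env k) (rel1 env)].
Proof.
move=> M; have Cs s := proj1 (all_dnf_clauses _) (M s).
split.
- move=> x; have [[_ _ tot _ _] [_ _ cv] vv _] := Cs (fun=> x).
  apply/and3P; split.
  + by move: tot; rewrite /eval_clause /= has_map has_enum /= !orbF.
  + by apply/forallP => h; move: (cv h); rewrite /eval_clause /= !orbF negb_and.
  + apply/forallP => h; apply/forall_inP => h' hh'; move: (vv h h' hh').
    by rewrite /eval_clause /= !orbF negb_and.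
- move=> i j; have [[_ _ _ pc pv] [nc nv _] _ _] := Cs (fun n => if n is 0 then i else j).
  move: pc pv nc nv; rewrite /eval_clause /= !orbF !has_map -!enumT !has_enum /eval_tlit /=.
  rewrite /well_linked /is_var => pc pv nc nv; apply/andP; split; apply/implyP => ij.
    by move: pc pv; rewrite ij /= => -> ->.
  by move: nc nv; rewrite ij /= => -> ->.
split.
  have [[ne _ _ _ _] _ _ _] := Cs (fun=> d0).
  by move: ne; rewrite /eval_clause /= !orbF so_arity_dnf_prefix // exists_tuple1 => /existsP.
move=> c; rewrite /rel1 => Sc; split.
  have [[_ sc _ _ _] _ _ _] := Cs (fun=> c).
  by move: sc; rewrite /eval_clause /= /eval_tlit /= Sc /= !orbF.
move=> x h hx; have [_ _ _ /(_ h)/andP[sp sn]] := Cs (fun n => if n is 0 then c else x).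
move: sp sn; rewrite /eval_clause /= /eval_tlit /= Sc hx /= !orbF.
by move=> sp sn; split=> cx; [move: sp | move: sn]; rewrite cx.
Qed.

Lemma dnf_matrix_complete env :
  (forall x, well_sorted x) -> (forall i j, well_linked i j) ->
  selects (rel1 env k) (rel1 env) ->
  eval_matrix k A (dnf_prefix k ex) env (dnf_clauses k).
Proof.
rewrite /selects /rel1 => sorted linked [[c0 Sc0] sel] s; apply/all_dnf_clauses.
have /and3P[tot /forallP cv /forallP vv] := sorted (s 0).
have /andP[/implyP pl /implyP nl] := linked (s 0) (s 1).
rewrite /eval_clause /= /eval_tlit /= !has_map -?enumT ?has_enum /= !orbF.
split; [split|split| |].
- by rewrite so_arity_dnf_prefix // exists_tuple1; apply/existsP; exists c0.
- by case: (boolP (nth _ env k [:: s 0])) => [/sel[-> _]|]; rewrite ?orbT.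
- by [].
- by case: (boolP (tPos A (s 0) (s 1))) => // /pl/andP[].
- by case: (boolP (tPos A (s 0) (s 1))) => // /pl/andP[].
- by case: (boolP (tNeg A (s 0) (s 1))) => // /nl/andP[].
- by case: (boolP (tNeg A (s 0) (s 1))) => // /nl/andP[].
- by move=> h; rewrite !orbF -negb_and.
- by move=> h h' hh'; rewrite !orbF -negb_and; move/forall_inP: (vv h); apply.
- move=> h; case: (boolP (nth _ env k [:: s 0])) => [Ss|_]; last by rewrite /= !orbT.
  have [_ sel_s0] := sel _ Ss.
  case: (boolP (tVar A h (s 1))) => [/sel_s0[sp sn]|_]; last by rewrite /= !orbT.
  case: (boolP (tPos A (s 0) (s 1))) => [/sp|_];
  by case: (boolP (tNeg A (s 0) (s 1))) => [/sn|_]; case: (nth _ env h [:: s 1]).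
Qed.

Lemma eq_selects S S' (R R' : nat -> D -> bool) :
  S =1 S' -> (forall h : 'I_k, R h =1 R' h) -> selects S R -> selects S' R'.
Proof.
move=> eS eR [[c Sc] sel]; split=> [|c']; first by exists c; rewrite -eS.
by rewrite -eS => /sel[cc selc]; split=> // x h /selc; rewrite !eR.
Qed.

Lemma selects_dnf_holds S (R : nat -> D -> bool) a :
  (forall i j, well_linked i j) -> (forall (h : 'I_k) x, tVar A h x -> R h x = a x) ->
  selects S R -> dnf_holds A a.
Proof.
move=> linked Ra [[c Sc] sel]; have [cc selc] := sel c Sc.
apply/existsP; exists c; rewrite cc; apply/forallP => x.
have /andP[/implyP pl /implyP nl] := linked c x.
apply/andP; split; apply/implyP => cx.
  by have /andP[_ /existsP[h hx]] := pl cx; rewrite -(Ra h x hx); apply: (selc x h hx).1.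
by have /andP[_ /existsP[h hx]] := nl cx; rewrite -(Ra h x hx); apply: (selc x h hx).2.
Qed.

Lemma dnf_holds_selects (R : nat -> D -> bool) a :
  (forall (h : 'I_k) x, tVar A h x -> R h x = a x) ->
  dnf_holds A a -> exists c, selects (fun y => y == c) R.
Proof.
move=> Ra /existsP[c /andP[cc /forallP lits]]; exists c; split; first by exists c.
move=> c' /eqP-> {c'}; split=> // x h hx; rewrite Ra //.
by have /andP[/implyP pl /implyP nl] := lits x.
Qed.

Definition agrees (j : nat) (env : seq (seq D -> bool)) (a : D -> bool) : Prop :=
  forall (h : 'I_k) x, h < j -> tVar A h x -> rel1 env h x = a x.

Lemma agrees_rcons j env a (o : 'I_k) r (b : D -> bool) :
  (forall x, well_sorted x) -> (forall x, r [:: x] = b x) -> size env = j -> o = j :> nat ->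
  agrees j env a -> agrees j.+1 (rcons env r) (fun x => if tVar A o x then b x else a x).
Proof.
move=> sorted rb sz oj ag h x; rewrite ltnS leq_eqVlt => /predU1P[hj|lt_hj] hx.
  have -> : o = h by apply: val_inj; rewrite /= oj hj.
  by rewrite hx /rel1 nth_rcons sz hj ltnn eqxx.
have neq_ho : h != o by apply: contraTneq lt_hj => ->; rewrite oj ltnn.
have /and3P[_ _ /forallP/(_ h)/forall_inP/(_ o neq_ho)] := sorted x.
rewrite hx /= => /negbTE->; rewrite -(ag h x lt_hj hx).
by rewrite /rel1 nth_rcons sz lt_hj.
Qed.

Lemma eval_selection_prefix (d0 : D) env a :
  encodes_qdnf A -> size env = k -> agrees k env a ->
  eval_prefix k A (dnf_prefix k ex) (dnf_clauses k) [:: (true, 1)] env <-> dnf_holds A a.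
Proof.
case/encodes_qdnfE => sorted linked sz ag.
have rel1_last r x : rel1 (rcons env r) k x = r [:: x].
  by rewrite /rel1 nth_rcons sz ltnn eqxx.
have agrees_last r (h : 'I_k) x : tVar A h x -> rel1 (rcons env r) h x = a x.
  by rewrite /rel1 nth_rcons sz ltn_ord; apply: ag.
split=> [[R /(dnf_matrix_sound d0)[_ _ sel]]|].
  exact: selects_dnf_holds linked (agrees_last _) sel.
case/(@dnf_holds_selects (rel1 env) _ (fun h x => ag h x (ltn_ord h)))=> c sel.
exists [set t : 1.-tuple D | thead t == c]; apply: dnf_matrix_complete => //.
apply: eq_selects sel => [x|h x]; first by rewrite rel1_last (rel_of_set1 (eq_op^~ c)).
by rewrite /rel1 !nth_rcons sz !ltn_ord.
Qed.

Lemma drop_enum_ord {n} (j : 'I_n) : drop j (enum 'I_n) = j :: drop j.+1 (enum 'I_n).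
Proof. by rewrite (drop_nth j) ?size_enum_ord // nth_ord_enum. Qed.

Lemma eval_block_prefix (d0 : D) n j env a :
  encodes_qdnf A -> j + n = k -> size env = j -> agrees j env a ->
  eval_prefix k A (dnf_prefix k ex) (dnf_clauses k) (block_prefix ex j n) env <->
  qeval A (odd j (+) ex) (drop j (enum 'I_k)) a.
Proof.
move=> enc; have [sorted _] := proj1 encodes_qdnfE enc.
elim: n j env a => [|n IH] j env a jnk sz ag.
  rewrite addn0 in jnk; rewrite jnk in sz ag *.
  by rewrite drop_oversize ?size_enum_ord //; apply: eval_selection_prefix.
have lt_jk : j < k by rewrite -jnk addnS ltnS leq_addr.
rewrite block_prefixS (drop_enum_ord (Ordinal lt_jk)).
have IHS env' a' : size env' = j.+1 -> agrees j.+1 env' a' ->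
    eval_prefix k A (dnf_prefix k ex) (dnf_clauses k) (block_prefix ex j.+1 n) env' <->
    qeval A (~~ (odd j (+) ex)) (drop j.+1 (enum 'I_k)) a'.
  by move=> sz' ag'; rewrite -addNb; apply: IH; rewrite ?addSnnS.
have szS r : size (rcons env r) = j.+1 by rewrite size_rcons sz.
have agS_rel (R : {set 1.-tuple D}) :=
  @agrees_rcons _ _ _ (Ordinal lt_jk) (rel_of k A R) [ffun x => rel_of k A R [:: x]]
    sorted (fun x => esym (ffunE _ x)) sz erefl ag.
have agS_fun (b : {ffun D -> bool}) :=
  @agrees_rcons _ _ _ (Ordinal lt_jk) _ b sorted (rel_of_set1 b) sz erefl ag.
rewrite /=; case: (odd j (+) ex) IHS => IHS; split.
- by case=> R /(IHS _ _ (szS _) (agS_rel R)); exists [ffun x => rel_of k A R [:: x]].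
- by case=> b /(IHS _ _ (szS _) (agS_fun b)); exists [set t : 1.-tuple D | b (thead t)].
- by move=> all_R b; apply/(IHS _ _ (szS _) (agS_fun b)).
- by move=> all_b R; apply/(IHS _ _ (szS _) (agS_rel R)).
Qed.

End DnfSemantics.

Lemma dnf_krom_defines k ex : defines (dnf_krom k ex) (fun A => true_qdnf A ex).
Proof.
move=> A nonempty; pose d0 : 'I_(dsize A) := Ordinal nonempty.
have agrees0 : agrees 0 [::] (fun _ : 'I_(dsize A) => false) by [].
have eval_dnf enc := eval_block_prefix ex d0 enc (add0n k) (erefl : size [::] = 0) agrees0.
split=> [sat|[enc]]; last by rewrite -(drop0 (enum _)) => /(eval_dnf enc).
have [env /(dnf_matrix_sound d0)[sorted linked _]] := eval_prefix_matrix sat.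
have enc : encodes_qdnf A by apply/encodes_qdnfE.
by split=> //; move/(eval_dnf enc): sat; rewrite drop0.
Qed.

(* The construction works for k = 0 as well. *)
Theorem proposition3p1 (k : nat) (hk : (1 <= k)%N) :
  (~~ odd k ->
     exists phi : krom_formula k,
       krom_class true k.+1 phi /\ defines phi (fun A => true_qdnf A true)) /\
  (odd k ->
     exists phi : krom_formula k,
       krom_class false k.+1 phi /\ defines phi (fun A => true_qdnf A false)).
Proof.
split=> par; [exists (dnf_krom k true) | exists (dnf_krom k false)];
  by split; [apply: dnf_krom_class; rewrite par | exact: dnf_krom_defines].
Qed.
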